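(* Let $n\ge 3$. The wheel $W_n$ (of order $n+1$) admits an $(a,d)$-distance antimagic labeling for some integers $a$ and $d\ge0$ if and only if $3\le n\le 5$.
   Context: The wheel $W_n$ ($n\ge3$) is obtained from a cycle $x_1x_2\cdots x_nx_1$ by adding a center vertex $x_0$ adjacent to all $x_1,\dots,x_n$. For a graph $G=(V,E)$ with $v=|V|$ and a bijection $f:V\to\{1,\dots,v\}$, the vertex-weight of $x$ is $w(x)=\sum_{y\in N(x)}f(y)$ with $N(x)$ the set of neighbours of $x$. For integers $a$ and $d\ge0$, $f$ is an $(a,d)$-distance antimagic labeling if the multiset of vertex-weights equals $\{a,a+d,\dots,a+(v-1)d\}$ (for $d=0$: all weights equal). *)

From mathcomp Require Import all_boot all_order all_algebra.
Set Implicit Arguments. Unset Strict Implicit. Unset Printing Implicit Defensive.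
Import GRing.Theory Num.Theory.

(* A simple graph on vertex set 'I_v is given by a symmetric irreflexive
   adjacency relation e. *)

(* Wheel W_n on vertex set 'I_(n.+1): vertex 0 is the centre x_0, vertex i
   (1 <= i <= n) is x_i; the rim is the cycle x_1 x_2 ... x_n x_1, i.e. x_i is
   adjacent to x_(i %% n + 1). *)
Definition wheel_adj (n : nat) : rel 'I_n.+1 := fun x y =>
  [|| (val x == 0) && (val y != 0),
      (val y == 0) && (val x != 0)
    | [&& val x != 0, val y != 0 &
          (val y == val x %% n + 1) || (val x == val y %% n + 1)]].

Arguments wheel_adj n : clear implicits.

Definition vweight (v : nat) (e : rel 'I_v) (f : 'I_v -> nat) (x : 'I_v) : nat :=
  \sum_(y : 'I_v | e x y) f y.

Definition is_labeling (v : nat) (f : 'I_v -> nat) : Prop :=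
  injective f /\ (forall x, 1 <= f x <= v)%N.

Definition ad_distance_antimagic (v : nat) (e : rel 'I_v) (a d : int)
    (f : 'I_v -> nat) : Prop :=
  is_labeling f /\
  perm_eq [seq (Posz (vweight e f x)) | x <- enum 'I_v]
          [seq (a + (Posz k) * d)%R | k <- iota 0 v].

From mathcomp Require Import all_boot all_order all_algebra zify.
Import GRing.Theory Num.Theory.

Set Implicit Arguments.
Unset Strict Implicit.
Unset Printing Implicit Defensive.

(* Obstruction for n >= 6.  Under a labeling f : V -> {1..n+1}, the centre
   sees every rim label, so its weight w0 satisfies 2 w0 >= n(n+1) > 6n,
   while a rim vertex sees three distinct labels, so its weight lies in the
   window [6, 3n].  The n+1 weights are the terms a, a+d, ..., a+nd of an
   arithmetic progression with d >= 0 in which every term but w0 lies in the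
   window; such a progression must end with w0 and have its first n terms in
   the window, whence (n-1) d <= 3n - 6 (so d <= 2) and w0 <= 3n + d <= 3n+2,
   contradicting 2 w0 >= n(n+1) >= 7n.

   Existence for n = 3, 4, 5 is witnessed by explicit labelings, checked by
   computation. *)

Lemma labeling_perm_iota (v : nat) (f : 'I_v -> nat) :
  is_labeling f -> perm_eq [seq f x | x <- enum 'I_v] (iota 1 v).
Proof.
move=> [f_inj f_range].
have uniq_f : uniq [seq f x | x <- enum 'I_v] by rewrite map_inj_uniq ?enum_uniq.
have sub_f : {subset [seq f x | x <- enum 'I_v] <= iota 1 v}.
  by move=> k /mapP [y _ ->]; rewrite mem_iota; move: (f_range y); lia.
have size_f : size (iota 1 v) <= size [seq f x | x <- enum 'I_v].
  by rewrite size_iota size_map size_enum_ord.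
have [_ same_mem] := uniq_min_size uniq_f sub_f size_f.
by apply: uniq_perm => //; apply: iota_uniq.
Qed.

Lemma sum_iota1 (m : nat) : (\sum_(i <- iota 1 m) i).*2 = m * m.+1.
Proof.
elim: m => [|m IH]; first by rewrite big_nil.
rewrite -[m.+1]addn1 iotaD big_cat big_seq1 doubleD IH add1n; lia.
Qed.

Lemma sum_labels (v : nat) (f : 'I_v -> nat) :
  is_labeling f -> (\sum_x f x).*2 = v * v.+1.
Proof.
move=> /labeling_perm_iota f_perm.
by rewrite -sum_iota1 -(perm_big _ f_perm) big_map big_enum.
Qed.

Definition rim_succ (n i : nat) : nat := if i == n then 1 else i.+1.
Definition rim_pred (n i : nat) : nat := if i == 1 then n else i.-1.

Lemma wheel_adj_center (n : nat) (y : 'I_n.+1) : wheel_adj n ord0 y = (y != ord0).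
Proof. by rewrite /wheel_adj -val_eqE /=; case: eqP. Qed.

Lemma wheel_adj_rim (n : nat) (x y : 'I_n.+1) : 3 <= n -> x != ord0 ->
  wheel_adj n x y = [|| val y == 0, val y == rim_succ n x | val y == rim_pred n x].
Proof.
move=> n_ge3; rewrite -val_eqE /= => x_neq0.
have x_le := ltn_ord x; have y_le := ltn_ord y.
have mod_small i : i <= n -> i %% n = if i == n then 0 else i.
  by case: eqP => [->|ne] le_in; rewrite ?modnn // modn_small //; lia.
rewrite /wheel_adj /rim_succ /rim_pred /= !mod_small //.
by repeat case: eqP; lia.
Qed.

(* A rim vertex sees three distinct labels from {1..n+1}: its weight is in
   [1+2+3, (n+1)+n+(n-1)]. *)
Lemma rim_weight_bounds (n : nat) (f : 'I_n.+1 -> nat) (x : 'I_n.+1) :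
  3 <= n -> is_labeling f -> x != ord0 ->
  6 <= vweight (wheel_adj n) f x <= 3 * n.
Proof.
move=> n_ge3 [f_inj f_range] x_neq0.
have x_rim : 0 < x <= n by move: x_neq0 (ltn_ord x); rewrite -val_eqE /=; lia.
have succ_lt : rim_succ n x < n.+1 by rewrite /rim_succ; case: eqP; lia.
have pred_lt : rim_pred n x < n.+1 by rewrite /rim_pred; case: eqP; lia.
set s := Ordinal succ_lt; set p := Ordinal pred_lt.
have nbrs_uniq : uniq [:: ord0; s; p].
  by rewrite /= !inE -!val_eqE /= /rim_succ /rim_pred; repeat case: eqP; lia.
have -> : vweight (wheel_adj n) f x = \sum_(y <- [:: ord0; s; p]) f y.
  rewrite big_uniq //; apply: eq_bigl => y.
  by rewrite wheel_adj_rim // !inE -!val_eqE.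
rewrite !big_cons big_nil addn0.
have lab_neq (y z : 'I_n.+1) : val y != val z -> f y != f z.
  by move=> /eqP yz; apply/eqP => /f_inj /(congr1 val).
have := lab_neq ord0 s; have := lab_neq ord0 p; have := lab_neq s p.
move: (f_range ord0) (f_range s) (f_range p).
rewrite /= /rim_succ /rim_pred; repeat case: eqP; lia.
Qed.

(* The centre sees all labels but its own, at least 1 + ... + n of them. *)
Lemma center_weight_lb (n : nat) (f : 'I_n.+1 -> nat) :
  is_labeling f -> n * n.+1 <= (vweight (wheel_adj n) f ord0).*2.
Proof.
move=> f_lab; have := sum_labels f_lab; have := (proj2 f_lab) ord0.
have -> : vweight (wheel_adj n) f ord0 = \sum_(y | y != ord0) f y.
  by apply: eq_bigl => y; rewrite wheel_adj_center.
rewrite (bigD1 ord0) //=; lia.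
Qed.

Section ArithmeticProgression.
Local Open Scope ring_scope.

(* An arithmetic progression a, a+d, ..., a+nd (d >= 0) all of whose terms
   but the value W lie in the window [lo, hi], with W above the window and
   the window actually hit, ends with W; hence W exceeds the window by at
   most d and the first n terms are squeezed into it. *)
Lemma ap_top_outlier (n : nat) (a d W lo hi : int) :
  (0 < n)%N -> 0 <= d -> hi < W ->
  (forall k, (k <= n)%N -> a + k%:Z * d = W \/ lo <= a + k%:Z * d <= hi) ->
  (exists2 k, (k <= n)%N & W = a + k%:Z * d) ->
  (exists2 j, (j <= n)%N & lo <= a + j%:Z * d <= hi) ->
  W <= hi + d /\ n.-1%:Z * d <= hi - lo.
Proof.
move=> n_gt0 d_ge0 hi_lt_W term [k k_le W_eq] [j _ win_j].
have [d0 | d_gt0] : d = 0 \/ 0 < d by lia.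
  by move: win_j hi_lt_W; rewrite W_eq d0 !mulr0 !addr0; lia.
have mono i l : (i <= l)%N -> a + i%:Z * d <= a + l%:Z * d.
  by move=> ?; rewrite lerD2l ler_wpM2r // lez_nat.
have [last_W | last_win] := term n (leqnn n); last first.
  by have := mono _ _ k_le; lia.
have pred_n : n.-1%:Z + 1 = n%:Z by rewrite -PoszD addn1 prednK.
have last_pred : a + n.-1%:Z * d + d = W by rewrite -last_W -pred_n mulrDl mul1r addrA.
have [|pred_win] := term n.-1 (leq_pred n); first lia.
have [|first_win] := term 0%N (leq0n n).
  by have := mono _ _ (leq0n n.-1); lia.
lia.
Qed.

End ArithmeticProgression.

Lemma antimagic_terms (v : nat) (e : rel 'I_v) (a d : int) (f : 'I_v -> nat) :
  ad_distance_antimagic e a d f ->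
  (forall k, k < v -> exists x, Posz (vweight e f x) = (a + k%:Z * d)%R) /\
  (forall x, exists2 k, k < v & Posz (vweight e f x) = (a + k%:Z * d)%R).
Proof.
move=> [_ weights_perm]; split.
  move=> k k_lt; have : (a + k%:Z * d)%R \in [seq (a + i%:Z * d)%R | i <- iota 0 v].
    by apply: map_f; rewrite mem_iota.
  by rewrite -(perm_mem weights_perm) => /mapP [x _ ->]; exists x.
move=> x; have : Posz (vweight e f x) \in [seq Posz (vweight e f y) | y <- enum 'I_v].
  by apply: map_f; rewrite mem_enum.
by rewrite (perm_mem weights_perm) => /mapP [k]; rewrite mem_iota => /andP [_ k_lt] ->; exists k.
Qed.

Lemma wheel_not_antimagic (n : nat) (a d : int) (f : 'I_n.+1 -> nat) :
  6 <= n -> (0 <= d)%R -> ~ ad_distance_antimagic (wheel_adj n) a d f.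
Proof.
move=> n_ge6 d_ge0 antimagic; have f_lab := proj1 antimagic.
set w := vweight (wheel_adj n) f.
have center_lb := center_weight_lb f_lab; rewrite -/w in center_lb.
have n_sq : 7 * n <= n * n.+1 by nia.
have rim_bounds x : x != ord0 -> 6 <= w x <= 3 * n.
  by apply: rim_weight_bounds => //; lia.
have [term_weight weight_term] := antimagic_terms antimagic.
have rim1 : (inord 1 : 'I_n.+1) != ord0 by rewrite -val_eqE /= inordK //; lia.
have [] := @ap_top_outlier n a d (w ord0) 6 (3 * n)%:Z.
- lia.
- done.
- lia.
- move=> k k_le; have [x <-] := term_weight k k_le; rewrite -/w.
  have [->|x_rim] := eqVneq x ord0; first by left.
  by right; have := rim_bounds x x_rim; lia.
- by have [k] := weight_term ord0; exists k.
- have [j j_lt wj] := weight_term (inord 1); exists j => //.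
  by rewrite -wj -/w; have := rim_bounds _ rim1; lia.
- move=> center_ub spread.
  have d_le2 : (d <= 2)%R by nia.
  lia.
Qed.

Lemma seq_labeling (v : nat) (s : seq nat) :
  size s = v -> uniq s -> all (fun k => 1 <= k <= v) s ->
  is_labeling (fun x : 'I_v => nth 0 s x).
Proof.
move=> size_s uniq_s range_s; split.
  by move=> x y /eqP; rewrite nth_uniq ?size_s // => /eqP /val_inj.
by move=> x; apply: (allP range_s); rewrite mem_nth ?size_s.
Qed.

(* Vertex weights as unconditional sums, ready to be unfolded by computation. *)
Lemma vweight_mkcond (v : nat) (e : rel 'I_v) (f : 'I_v -> nat) (x : 'I_v) :
  vweight e f x = \sum_(y < v) (if e x y then f y else 0).
Proof. exact: big_mkcond. Qed.

Ltac check_weights :=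
  rewrite !enum_ordSl enum_ord0 /= !vweight_mkcond !big_ord_recl !big_ord0;
  vm_compute; reflexivity.

Lemma wheel_small_antimagic (n : nat) : 3 <= n <= 5 ->
  exists (a d : int) (f : 'I_n.+1 -> nat),
    (0 <= d)%R /\ ad_distance_antimagic (wheel_adj n) a d f.
Proof.
move=> n_range; have : [|| n == 3, n == 4 | n == 5] by lia.
case/or3P => /eqP ->.
- exists (Posz 6), (Posz 1), (fun x : 'I_4 => nth 0 [:: 1; 2; 3; 4] x).
  by split=> //; split; [exact: seq_labeling | check_weights].
- exists (Posz 10), (Posz 0), (fun x : 'I_5 => nth 0 [:: 5; 1; 2; 4; 3] x).
  by split=> //; split; [exact: seq_labeling | check_weights].
- exists (Posz 10), (Posz 1), (fun x : 'I_6 => nth 0 [:: 6; 1; 2; 3; 4; 5] x).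
  by split=> //; split; [exact: seq_labeling | check_weights].
Qed.

Theorem mainTheorem11 (n : nat) (hn : (3 <= n)%N) :
  (exists (a d : int) (f : 'I_n.+1 -> nat),
      (0 <= d)%R /\ ad_distance_antimagic (wheel_adj n) a d f)
  <-> (n <= 5)%N.
Proof.
split=> [[a [d [f [d_ge0 antimagic]]]] | n_le5].
  by rewrite leqNgt; apply/negP => n_gt5; exact: wheel_not_antimagic antimagic.
by apply: wheel_small_antimagic; rewrite hn.
Qed.
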